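(* Let $q$ be an odd prime power, $d\ge 2$ an even integer, and $A\subset\mathbb F_q^d$. Let $\mathcal{SQ}(A)$ be the number of pairs $(x,y)\in A\times A$ such that $\eta(\|x-y\|)=1$. Then $$\mathcal{SQ}(A)\le \frac{|A|^2}{2}+\frac{q^{\frac d2}}{2}|A|-\frac{|A|^2}{2q^{\frac d2}}-\frac{|A|}{2}.$$
   Context: For $x,y\in\mathbb F_q^d$, $\|x-y\|:=(x_1-y_1)^2+\cdots+(x_d-y_d)^2\in\mathbb F_q$. $\eta$ denotes the quadratic character of $\mathbb F_q$ with the convention $\eta(0)=0$. *)

From mathcomp Require Import all_boot all_order all_algebra all_field.
Set Implicit Arguments. Unset Strict Implicit. Unset Printing Implicit Defensive.
Import GRing.Theory Num.Theory.
Local Open Scope ring_scope.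

Definition sqdist (F : finFieldType) (d : nat) (x y : 'rV[F]_d) : F :=
  \sum_(i < d) (x ord0 i - y ord0 i) ^+ 2.

Definition eta (F : finFieldType) (a : F) : int :=
  if a == 0 then 0 else if [exists b : F, b ^+ 2 == a] then 1 else -1.

Definition SQ (F : finFieldType) (d : nat) (A : {set 'rV[F]_d}) : nat :=
  #|[set p in setX A A | eta (sqdist p.1 p.2) == 1]|.

From mathcomp Require Import all_boot all_order all_algebra all_field.
From mathcomp Require Import all_fingroup all_character.
From mathcomp Require Import ring.
Set Implicit Arguments. Unset Strict Implicit. Unset Printing Implicit Defensive.
Import Order.TTheory GRing.Theory Num.Theory.
Local Open Scope ring_scope.

(* Since 2 [eta t = 1] = eta t ^ 2 + eta t, twice SQ(A) is D + E, where D and E sum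
   eta(||x - y||)^2 and eta(||x - y||) over pairs of A.  D <= |A| (|A| - 1), as only the
   diagonal has ||x - y|| = 0.  Expanding in the additive characters psi (m . x) of F_q^d,
   q^d E = sum_m lambda(m) |expsum A m|^2, where lambda, the Fourier transform of
   eta(||.||), factors over the coordinates into quadratic Gauss sums:
   lambda(m) = G^d eta(-||m|| / 4).  As d is even, G^d = (eta(-1) q)^(d/2) is real, so
   lambda <= q^(d/2) and lambda(0) = 0, and Parseval yields
   q^d E <= q^(d/2) (q^d |A| - |A|^2). *)

Lemma sumr_nat_card (T : finType) (R : pzSemiRingType) (P : pred T) :
  \sum_(u : T) (P u)%:R = #|[set u | P u]|%:R :> R.
Proof.
by rewrite -sum1dep_card natr_sum [RHS]big_mkcond; apply: eq_bigr => u _; case: (P u).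
Qed.

Section QuadraticCharacter.
Variable F : finFieldType.

Variant eta_spec (a : F) : int -> Prop :=
| EtaZero of a = 0 : eta_spec a 0
| EtaSquare b of b != 0 & b ^+ 2 = a : eta_spec a 1
| EtaNonSquare of a != 0 & (forall b, b ^+ 2 != a) : eta_spec a (-1).

Lemma etaP a : eta_spec a (eta a).
Proof.
rewrite /eta; have [->|a0] := eqVneq a 0; first exact: EtaZero.
case: existsP => [[b /eqP b2a]|noroot]; last first.
  by apply: EtaNonSquare => // b; apply/negP => b2a; apply: noroot; exists b.
by apply: (EtaSquare (b := b)) => //; apply: contraNneq a0 => b0; rewrite -b2a b0 expr0n.
Qed.

Lemma eta0 : eta (0 : F) = 0.
Proof. by rewrite /eta eqxx. Qed.

Lemma eta_sqrM (c b : F) : c != 0 -> eta (c ^+ 2 * b) = eta b.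
Proof.
move=> c0; rewrite /eta mulf_eq0 expf_eq0 (negPf c0) /=.
case: (b == 0) => //; congr (if _ then _ else _).
apply/existsP/existsP => -[e /eqP e2]; last by exists (c * e); rewrite exprMn e2.
by exists (e / c); rewrite expr_div_n e2 mulrC mulKf // expf_neq0.
Qed.

Lemma eta_sqr (c : F) : c != 0 -> eta (c ^+ 2) = 1.
Proof.
move=> c0; rewrite -[c ^+ 2]mulr1 eta_sqrM //.
by case: etaP => // [/eqP|_ /(_ 1)]; rewrite ?oner_eq0 ?expr1n ?eqxx.
Qed.

Lemma eta1 : eta (1 : F) = 1.
Proof. by rewrite -(expr1n F 2) eta_sqr ?oner_neq0. Qed.

Lemma eta_nonsquare (a : F) : (forall b, b ^+ 2 != a) -> eta a = -1.
Proof. by case: etaP => [-> /(_ 0)|b _ <- /(_ b)|]; rewrite ?expr0n ?eqxx. Qed.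

Lemma sqr_eta (a : F) : a != 0 -> eta a ^+ 2 = 1.
Proof. by case: etaP => // ->; rewrite eqxx. Qed.

Lemma eta_norm_le1 (a : F) : `|eta a| <= 1.
Proof. by case: etaP. Qed.

Hypothesis oddF : odd #|F|.

Lemma two_neq0 : 2%:R != 0 :> F.
Proof.
apply: contraTneq oddF => two0.
have pchar2 : (2 \in [pchar F])%N by rewrite inE two0 eqxx.
have := finNzRing_gt1 F; rewrite (card_pprimeChar pchar2).
by case: (logn _ _) => // n _; rewrite oddX.
Qed.

Lemma card_sqrt (u : F) : #|[set v : F | v ^+ 2 == u]|%:Z = 1 + eta u.
Proof.
case: etaP => [->|b b0 <-|_ noroot].
- rewrite (_ : [set v | _] = [set 0]) ?cards1 //.
  by apply/setP => v; rewrite !inE expf_eq0.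
- rewrite (_ : [set v | _] = [set b; - b]); last by apply/setP => v; rewrite !inE eqf_sqr.
  by rewrite cards2 -addr_eq0 -mulr2n -mulr_natr mulf_eq0 (negPf b0) (negPf two_neq0).
- rewrite (_ : [set v | _] = set0) ?cards0 //.
  by apply/setP => v; rewrite !inE (negPf (noroot v)).
Qed.

Lemma sum_eta : \sum_(u : F) eta u = 0.
Proof.
have sum_card_sqrt : (\sum_(u : F) #|[set v : F | v ^+ 2 == u]|)%N = #|F|.
  rewrite -[in RHS]sum1_card [RHS](partition_big (fun v : F => v ^+ 2) predT) //=.
  by apply: eq_bigr => u _; rewrite -sum1dep_card.
have : \sum_(u : F) (1 + eta u) = #|F|%:R.
  by rewrite -sum_card_sqrt natr_sum; apply: eq_bigr => u _; rewrite -card_sqrt natz.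
by rewrite big_split sumr_const /= -[RHS]addr0 => /addrI.
Qed.

Lemma card_squares_nonsquares :
  #|[set u : F | eta u == 1]| = #|[set u : F | eta u == -1]|.
Proof.
have : \sum_(u : F) ((eta u == 1)%:R - (eta u == -1)%:R) = 0 :> int.
  by rewrite -[RHS]sum_eta; apply: eq_bigr => u _; case: etaP.
by rewrite sumrB !sumr_nat_card => /eqP; rewrite subr_eq0 eqr_nat => /eqP.
Qed.

Lemma eta_mul (a b : F) : eta (a * b) = eta a * eta b.
Proof.
case: (etaP a) => [->|c c0 <-|a0 noroot_a]; first by rewrite mul0r eta0 mul0r.
  by rewrite eta_sqrM // mul1r.
case: (etaP b) => [->|c c0 <-|b0 noroot_b]; first by rewrite mulr0 eta0 mulr0.
  by rewrite mulrC eta_sqrM // (eta_nonsquare noroot_a) mulr1.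
(* Multiplication by the non-square a maps the squares injectively into the equally
   many non-squares, so b = a * x for a square x. *)
set S := [set x : F | eta x == 1]; set N := [set x : F | eta x == -1].
have mulS_N : [set a * x | x in S] = N.
  apply/eqP; rewrite eqEcard card_imset; last exact: mulfI.
  rewrite card_squares_nonsquares leqnn andbT.
  apply/subsetP => y /imsetP[x]; rewrite inE => + ->; case: etaP => // c c0 <- _.
  by rewrite inE mulrC eta_sqrM // (eta_nonsquare noroot_a).
have : b \in N by rewrite inE (eta_nonsquare noroot_b).
rewrite -mulS_N => /imsetP[x]; rewrite inE => /eqP eta_x ->.
by rewrite mulrA -expr2 eta_sqrM.
Qed.

Lemma eta_inv (a : F) : eta a^-1 = eta a.
Proof.
have [->|a0] := eqVneq a 0; first by rewrite invr0.
have -> : a^-1 = a^-1 ^+ 2 * a by rewrite expr2 -mulrA mulVf // mulr1.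
by rewrite eta_sqrM // invr_eq0.
Qed.
End QuadraticCharacter.

Definition sqnorm (R : pzRingType) (d : nat) (w : 'rV[R]_d) : R := \sum_i w 0 i ^+ 2.
Definition vdot (R : pzRingType) (d : nat) (m w : 'rV[R]_d) : R := \sum_i m 0 i * w 0 i.

Lemma sqdistE (F : finFieldType) (d : nat) (x y : 'rV[F]_d) : sqdist x y = sqnorm (x - y).
Proof. by apply: eq_bigr => i _; rewrite !mxE. Qed.

Lemma sqnorm0 (R : pzRingType) (d : nat) : sqnorm (0 : 'rV[R]_d) = 0.
Proof. by rewrite /sqnorm big1 // => i _; rewrite mxE expr0n. Qed.

Lemma vdot0l (R : pzRingType) (d : nat) (w : 'rV[R]_d) : vdot 0 w = 0.
Proof. by rewrite /vdot big1 // => i _; rewrite mxE mul0r. Qed.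

Lemma vdot0r (R : pzRingType) (d : nat) (m : 'rV[R]_d) : vdot m 0 = 0.
Proof. by rewrite /vdot big1 // => i _; rewrite mxE mulr0. Qed.

Lemma vdotBr (R : pzRingType) (d : nat) (m w u : 'rV[R]_d) :
  vdot m (w - u) = vdot m w - vdot m u.
Proof. by rewrite /vdot -sumrB; apply: eq_bigr => i _; rewrite !mxE mulrBr. Qed.

Lemma sum_row_prod (R : comPzSemiRingType) (T : finType) (d : nat) (f : 'I_d -> T -> R) :
  \sum_(w : 'rV[T]_d) \prod_i f i (w 0 i) = \prod_i \sum_(x : T) f i x.
Proof.
rewrite bigA_distr_bigA (reindex (fun g : {ffun 'I_d -> T} => \row_i g i)) /=.
  by apply: eq_bigr => g _; apply: eq_bigr => i _; rewrite mxE.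
apply: onW_bij; exists (fun w : 'rV[T]_d => [ffun i => w 0 i]) => [g|w].
  by apply/ffunP => i; rewrite ffunE mxE.
by apply/rowP => i; rewrite mxE ffunE.
Qed.

Notation etaC a := ((eta a)%:~R : algC).

Section AdditiveCharacter.
Variables (F : finFieldType) (psi : F -> algC).
Hypotheses (psiD : {morph psi : x y / x + y >-> x * y}) (psi0 : psi 0 = 1).
Hypotheses (psiN : forall x, psi (- x) = (psi x)^*) (psi_nontrivial : exists x, psi x != 1).

Lemma psi_sum (I : Type) (r : seq I) (P : pred I) (f : I -> F) :
  psi (\sum_(i <- r | P i) f i) = \prod_(i <- r | P i) psi (f i).
Proof. exact: (big_morph psi psiD psi0). Qed.

Lemma psiB x y : psi (x - y) = psi x * (psi y)^*.
Proof. by rewrite psiD psiN. Qed.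

Lemma sum_psiM a : \sum_(x : F) psi (a * x) = (a == 0)%:R * #|F|%:R.
Proof.
have [->|a0] := eqVneq a 0.
  by rewrite mul1r -sumr_const; apply: eq_bigr => x _; rewrite mul0r psi0.
have [x0 psi_x0] := psi_nontrivial; rewrite mul0r.
suff : (\sum_x psi (a * x)) * (psi x0 - 1) = 0.
  by move/eqP; rewrite mulf_eq0 subr_eq0 (negPf psi_x0) orbF => /eqP.
apply/eqP; rewrite mulrBr mulr1 subr_eq0 mulr_suml.
rewrite [X in _ == X](reindex_inj (addIr (x0 / a))) /=.
by apply/eqP/eq_bigr => x _; rewrite mulrDr mulrCA divff // mulr1 psiD.
Qed.

Variable d : nat.
Local Notation V := 'rV[F]_d.

Lemma sum_psi_vdot (v : V) :
  \sum_(m : V) psi (vdot m v) = (v == 0)%:R * (#|F| ^ d)%:R.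
Proof.
transitivity (\prod_i \sum_(x : F) psi (x * v 0 i)).
  by rewrite -sum_row_prod; apply: eq_bigr => m _; rewrite psi_sum.
rewrite (eq_bigr (fun i => (v 0 i == 0)%:R * #|F|%:R)) => [|i _]; last first.
  by rewrite -sum_psiM; apply: eq_bigr => x _; rewrite mulrC.
have [->|v0] := eqVneq v 0.
  rewrite mul1r (eq_bigr (fun=> #|F|%:R)) => [|i _]; last by rewrite mxE eqxx mul1r.
  by rewrite prodr_const card_ord natrX.
have /existsP[i vi0] : [exists i, v 0 i != 0].
  apply: contraNT v0 => /existsPn v_eq0; apply/eqP/rowP => i.
  by rewrite mxE; apply/eqP/negPn/v_eq0.
by rewrite (bigD1 i) //= (negPf vi0) !mul0r.
Qed.

Definition fourier (f : V -> algC) (m : V) : algC := \sum_(w : V) f w * psi (vdot m w).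

Definition expsum (A : {set V}) (m : V) : algC := \sum_(y in A) psi (vdot m y).

Lemma fourier_inversion (f : V -> algC) (u : V) :
  (#|F| ^ d)%:R * f u = \sum_(m : V) fourier f m * (psi (vdot m u))^*.
Proof.
transitivity (\sum_(w : V) f w * \sum_(m : V) psi (vdot m (w - u))).
  rewrite (bigD1 u) //= [X in _ + X]big1 => [|w wu]; last first.
    by rewrite sum_psi_vdot subr_eq0 (negPf wu) mul0r mulr0.
  by rewrite subrr sum_psi_vdot eqxx mul1r mulrC addr0.
under eq_bigr do rewrite mulr_sumr.
rewrite exchange_big; apply: eq_bigr => m _.
rewrite /fourier big_distrl; apply: eq_bigr => w _.
by rewrite vdotBr psiB mulrA.
Qed.

Lemma fourier_convolution (f : V -> algC) (A : {set V}) :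
  (#|F| ^ d)%:R * \sum_(x in A) \sum_(y in A) f (x - y) =
  \sum_(m : V) fourier f m * `|expsum A m| ^+ 2.
Proof.
rewrite mulr_sumr.
rewrite (eq_bigr (fun x => \sum_m fourier f m * ((psi (vdot m x))^* * expsum A m))).
  rewrite exchange_big; apply: eq_bigr => m _.
  by rewrite -mulr_sumr -mulr_suml normCK (mulrC (expsum A m)) /expsum rmorph_sum.
move=> x _; rewrite mulr_sumr.
under eq_bigr => y _ do rewrite fourier_inversion.
rewrite exchange_big; apply: eq_bigr => m _; rewrite /expsum !mulr_sumr.
by apply: eq_bigr => y _; rewrite vdotBr psiB rmorphM /= conjCK mulrC.
Qed.

Lemma sum_normC_expsum (A : {set V}) :
  \sum_(m : V) `|expsum A m| ^+ 2 = (#|F| ^ d)%:R * #|A|%:R.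
Proof.
have delta_hat m : fourier (fun u => (u == 0)%:R) m = 1.
  rewrite /fourier (bigD1 0) //= big1 => [|w /negPf->]; last by rewrite mul0r.
  by rewrite eqxx mul1r vdot0r psi0 addr0.
transitivity (\sum_(m : V) fourier (fun u => (u == 0)%:R) m * `|expsum A m| ^+ 2).
  by apply: eq_bigr => m _; rewrite delta_hat mul1r.
rewrite -fourier_convolution -sumr_const; congr (_ * _); apply: eq_bigr => x xA.
rewrite (bigD1 x) //= subrr eqxx big1 ?addr0 // => y /andP[_ /negPf].
by rewrite subr_eq0 eq_sym => ->.
Qed.

Lemma expsum0 (A : {set V}) : expsum A 0 = #|A|%:R.
Proof.
by rewrite /expsum (eq_bigr (fun=> 1)) ?sumr_const // => y _; rewrite vdot0l psi0.
Qed.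

Lemma fourier_sum_le (f : V -> algC) (A : {set V}) (B : algC) :
  fourier f 0 = 0 -> (forall m, fourier f m <= B) ->
  (#|F| ^ d)%:R * \sum_(x in A) \sum_(y in A) f (x - y) <=
  B * ((#|F| ^ d)%:R * #|A|%:R - #|A|%:R ^+ 2).
Proof.
move=> f0 fB; rewrite fourier_convolution (bigD1 0) //= f0 mul0r add0r.
rewrite -sum_normC_expsum [X in _ * (X - _)](bigD1 0) //= expsum0 normr_nat addrC addrK.
by rewrite mulr_sumr; apply: ler_sum => m _; apply: ler_wpM2r (fB m); rewrite exprn_ge0.
Qed.

Hypothesis oddF : odd #|F|.

Lemma sum_comp_sqr (f : F -> algC) :
  \sum_(v : F) f (v ^+ 2) = \sum_(u : F) (1 + etaC u) * f u.
Proof.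
rewrite (partition_big (fun v : F => v ^+ 2) predT) //=; apply: eq_bigr => u _.
rewrite (eq_bigr (fun=> f u)) => [|v /eqP <-] //; rewrite sumr_const -mulr_natl.
rewrite -[1 + _]/((1 : int)%:~R + etaC u) -intrD -card_sqrt //.
by congr (_%:R * _); apply: eq_card => v; rewrite inE.
Qed.

Lemma etaC_mul (a b : F) : etaC (a * b) = etaC a * etaC b.
Proof. by rewrite eta_mul // intrM. Qed.

Lemma etaC_sqr (a : F) : a != 0 -> etaC a ^+ 2 = 1.
Proof. by move=> a0; rewrite -rmorphXn /= sqr_eta. Qed.

Definition gauss_sum := \sum_(s : F) etaC s * psi s.

Lemma etaC_gauss_sum t : etaC t * gauss_sum = \sum_(s : F) etaC s * psi (s * t).
Proof.
have [->|t0] := eqVneq t 0.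
  rewrite eta0 mul0r; under eq_bigr do rewrite mulr0 psi0 mulr1.
  by rewrite -rmorph_sum sum_eta.
rewrite (reindex_inj (mulIf (invr_neq0 t0))) mulr_sumr.
by apply: eq_bigr => s _; rewrite divfK // etaC_mul eta_inv // mulrCA mulrA.
Qed.

Lemma conj_gauss_sum : gauss_sum^* = etaC (-1 : F) * gauss_sum.
Proof.
rewrite etaC_gauss_sum rmorph_sum; apply: eq_bigr => s _.
by rewrite rmorphM rmorph_int mulrN1 psiN.
Qed.

Lemma gauss_sum_normC : gauss_sum * gauss_sum^* = #|F|%:R.
Proof.
rewrite {2}/gauss_sum rmorph_sum mulr_sumr.
transitivity (\sum_(s : F) etaC s * \sum_(t : F) psi ((s - 1) * t)).
  rewrite (eq_bigr (fun t => \sum_s etaC s * psi ((s - 1) * t))) => [|t _].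
    by rewrite exchange_big; apply: eq_bigr => s _; rewrite mulr_sumr.
  rewrite rmorphM /= rmorph_int -psiN mulrA [gauss_sum * _]mulrC etaC_gauss_sum mulr_suml.
  by apply: eq_bigr => s _; rewrite -mulrA -psiD mulrBl mul1r.
rewrite (bigD1 1) //= [X in _ + X]big1 => [|s s1]; last first.
  by rewrite sum_psiM subr_eq0 (negPf s1) !mul0r mulr0.
by rewrite sum_psiM subrr eqxx eta1 !mul1r addr0.
Qed.

Lemma gauss_sum_sqr : gauss_sum ^+ 2 = etaC (-1 : F) * #|F|%:R.
Proof.
have e2 : etaC (-1 : F) ^+ 2 = 1 by rewrite etaC_sqr // oppr_eq0 oner_neq0.
by rewrite -gauss_sum_normC conj_gauss_sum -[LHS]mul1r -{1}e2; ring.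
Qed.

Lemma gauss_sum_neq0 : gauss_sum != 0.
Proof.
apply/eqP => G0; have := gauss_sum_normC; rewrite G0 mul0r => /esym/eqP.
by rewrite pnatr_eq0 gtn_eqF // ltnW // finNzRing_gt1.
Qed.

Lemma sum_psi_sqr (s : F) : s != 0 -> \sum_(v : F) psi (s * v ^+ 2) = etaC s * gauss_sum.
Proof.
move=> s0; rewrite (sum_comp_sqr (fun u => psi (s * u))).
under eq_bigr do rewrite mulrDl mul1r.
rewrite big_split /= sum_psiM (negPf s0) mul0r add0r etaC_gauss_sum.
by apply: eq_bigr => u _; rewrite (mulrC s).
Qed.

(* Completing the square. *)
Lemma sum_psi_quadratic (s b : F) : s != 0 ->
  \sum_(v : F) psi (s * v ^+ 2 + b * v) =
  psi (- (b ^+ 2 / 4%:R) / s) * (etaC s * gauss_sum).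
Proof.
move=> s0; rewrite -sum_psi_sqr // mulr_sumr (reindex_inj (addIr (- (b / (2%:R * s))))) /=.
apply: eq_bigr => v _; rewrite -psiD; congr psi.
have two0 := two_neq0 oddF; have four0 : 4%:R != 0 :> F by rewrite (natrM F 2 2) mulf_neq0.
by field; rewrite s0 four0 two0.
Qed.

Lemma sum_etaC_psi_div (t : F) : \sum_(s : F) etaC s * psi (t / s) = etaC t * gauss_sum.
Proof.
rewrite etaC_gauss_sum (reindex_inj invr_inj) /=.
by apply: eq_bigr => s _; rewrite eta_inv // invrK (mulrC t).
Qed.

Hypothesis d_even : ~~ odd d.

Lemma etaC_expr_even (s : F) : s != 0 -> etaC s ^+ d = 1.
Proof.
by move=> s0; rewrite -(odd_double_half d) (negPf d_even) -mul2n exprM etaC_sqr // expr1n.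
Qed.

Lemma sum_psi_sqnorm_vdot (s : F) (m : V) : s != 0 ->
  \sum_(w : V) psi (s * sqnorm w + vdot m w) =
  gauss_sum ^+ d * psi (- (sqnorm m / 4%:R) / s).
Proof.
move=> s0; transitivity (\sum_(w : V) \prod_i psi (s * w 0 i ^+ 2 + m 0 i * w 0 i)).
  by apply: eq_bigr => w _; rewrite -psi_sum big_split /= mulr_sumr.
rewrite (sum_row_prod (fun i x => psi (s * x ^+ 2 + m 0 i * x))).
under eq_bigr do rewrite sum_psi_quadratic //.
rewrite big_split /= -psi_sum prodr_const card_ord exprMn etaC_expr_even // mul1r.
by rewrite mulrC -mulr_suml sumrN -mulr_suml.
Qed.

Lemma fourier_eta_sqnorm (m : V) :
  fourier (fun w => etaC (sqnorm w)) m = gauss_sum ^+ d * etaC (- (sqnorm m / 4%:R)).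
Proof.
(* [etaC_gauss_sum] turns the transform into Gaussian sums over each coordinate. *)
apply: (mulIf gauss_sum_neq0).
rewrite -mulrA -sum_etaC_psi_div [RHS]mulr_sumr [LHS]mulr_suml.
transitivity (\sum_(w : V) \sum_(s : F) etaC s * psi (s * sqnorm w + vdot m w)).
  apply: eq_bigr => w _; rewrite mulrAC etaC_gauss_sum mulr_suml.
  by apply: eq_bigr => s _; rewrite -mulrA -psiD.
rewrite exchange_big; apply: eq_bigr => s _; rewrite -mulr_sumr.
have [->|s0] := eqVneq s 0; first by rewrite eta0 !mul0r mulr0.
by rewrite sum_psi_sqnorm_vdot // mulrCA.
Qed.

Lemma fourier_eta_sqnorm0 : fourier (fun w => etaC (sqnorm w)) 0 = 0.
Proof. by rewrite fourier_eta_sqnorm sqnorm0 mul0r oppr0 eta0 mulr0. Qed.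

Lemma fourier_eta_sqnorm_le (m : V) :
  fourier (fun w => etaC (sqnorm w)) m <= (#|F| ^ d./2)%:R.
Proof.
have Gd : gauss_sum ^+ d = (etaC (-1 : F) * #|F|%:R) ^+ d./2.
  by rewrite -gauss_sum_sqr -exprM mul2n -{1}(odd_double_half d) (negPf d_even).
rewrite fourier_eta_sqnorm Gd exprMn -natrX mulrAC -rmorphXn -intrM.
rewrite ler_piMl ?ler0n ?lerz1 //.
apply: le_trans (ler_norm _) _; rewrite normrM normrX.
by rewrite mulr_ile1 ?exprn_ge0 ?exprn_ile1 ?eta_norm_le1.
Qed.

Lemma sum_etaC_sqnorm_le (A : {set V}) :
  (#|F| ^ d)%:R * \sum_(x in A) \sum_(y in A) etaC (sqnorm (x - y)) <=
  (#|F| ^ d./2)%:R * ((#|F| ^ d)%:R * #|A|%:R - #|A|%:R ^+ 2).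
Proof. exact: fourier_sum_le fourier_eta_sqnorm0 fourier_eta_sqnorm_le. Qed.
End AdditiveCharacter.

Lemma exists_additive_character (F : finFieldType) : exists psi : F -> algC,
  [/\ {morph psi : x y / x + y >-> x * y}, psi 0 = 1,
      forall x, psi (- x) = (psi x)^* & exists x, psi x != 1].
Proof.
have [k k_neq0] : exists k : Iirr [set: F], k != 0.
  have : (1 < #|Iirr [set: F]|)%N.
    by rewrite card_Iirr_abelian ?FinRing.zmod_abelian // cardsT finNzRing_gt1.
  case/card_gt1P => i [j [_ _ ij]].
  by case: (eqVneq i 0) => [i0|]; [exists j; rewrite -i0 eq_sym | exists i].
have lin : 'chi_k \is a linear_char by apply/char_abelianP; apply: FinRing.zmod_abelian.
exists (fun x => 'chi_k x); split.
- by move=> x y; rewrite -FinRing.zmodMgE lin_charM ?inE.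
- by rewrite -FinRing.zmod1gE lin_char1.
- by move=> x; rewrite -FinRing.zmodVgE lin_charV_conj ?inE.
- apply/existsP; apply: contraR k_neq0; rewrite negb_exists => /forallP chi_k1.
  rewrite -irr_eq1; apply/eqP/cfunP => x; rewrite cfun1E inE.
  by move: (chi_k1 x); rewrite negbK => /eqP.
Qed.

Section Counting.
Variables (F : finFieldType) (d : nat) (A : {set 'rV[F]_d}).

Lemma SQ_sum :
  (SQ A)%:R = \sum_(x in A) \sum_(y in A) ((eta (sqnorm (x - y)) == 1)%:R : algC).
Proof.
rewrite pair_big big_mkcond /SQ -sumr_nat_card; apply: eq_bigr => -[x y] _ /=.
by rewrite !inE sqdistE /=; case: (x \in A); case: (y \in A).
Qed.

Lemma indicator_eta_eq1 (t : F) : 2%:R * (eta t == 1)%:R = etaC t ^+ 2 + etaC t :> algC.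
Proof.
case: etaP => *; rewrite ?(mulr0z, mulr1z, mulrN1z) /=.
all: by rewrite ?(mulr0, mulr1, expr0n, expr1n, sqrrN, addr0, addrN).
Qed.

Lemma sum_etaC_sqr_le :
  \sum_(x in A) \sum_(y in A) etaC (sqnorm (x - y)) ^+ 2 <= #|A|%:R * (#|A|%:R - 1).
Proof.
rewrite mulr_natl -sumr_const; apply: ler_sum => x xA.
have -> : #|A|%:R - 1 = \sum_(y in A | y != x) 1 :> algC.
  by rewrite -sumr_const (bigD1 x) //= addrC addrK.
rewrite (bigD1 x) //= subrr sqnorm0 eta0 expr0n add0r.
by apply: ler_sum => y _; rewrite -rmorphXn /= lerz1; case: etaP.
Qed.
End Counting.

Lemma SQ_le_nat (F : finFieldType) (d : nat) (A : {set 'rV[F]_d}) :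
  odd #|F| -> ~~ odd d ->
  (2 * #|F| ^ d./2 * SQ A + #|F| ^ d./2 * #|A| + #|A| ^ 2 <=
   #|F| ^ d./2 * #|A| ^ 2 + (#|F| ^ d./2) ^ 2 * #|A|)%N.
Proof.
move=> oddF d_even; have [psi [psiD psi0 psiN psi_nt]] := exists_additive_character F.
pose D := \sum_(x in A) \sum_(y in A) etaC (sqnorm (x - y)) ^+ 2.
pose E := \sum_(x in A) \sum_(y in A) etaC (sqnorm (x - y)).
have D_le : D <= #|A|%:R * (#|A|%:R - 1) := sum_etaC_sqr_le A.
have QE_le := sum_etaC_sqnorm_le psiD psi0 psiN psi_nt oddF d_even A; rewrite -/E in QE_le.
have two_SQ : 2%:R * (SQ A)%:R = D + E.
  rewrite SQ_sum mulr_sumr -big_split; apply: eq_bigr => x _.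
  by rewrite mulr_sumr -big_split; apply: eq_bigr => y _; rewrite indicator_eta_eq1.
have N_Q2 : (#|F| ^ d)%:R = ((#|F| ^ d./2) ^ 2)%:R :> algC.
  by rewrite -expnM muln2 -{1}(odd_double_half d) (negPf d_even).
rewrite N_Q2 !natrM in QE_le; rewrite -(ler_nat algC) !natrD !natrM.
set Q := (#|F| ^ d./2)%:R in QE_le *; set a := #|A|%:R in D_le QE_le *.
have Q_gt0 : 0 < Q by rewrite ltr0n expn_gt0 ltnW // finNzRing_gt1.
have E_le : Q * E <= Q * Q * a - a ^+ 2 by rewrite -(ler_pM2l Q_gt0) mulrA.
rewrite -subr_ge0 (_ : _ - _ = Q * (a * (a - 1) - D) + (Q * Q * a - a ^+ 2 - Q * E) +
                               Q * (D + E - 2%:R * (SQ A)%:R)); last by ring.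
rewrite -two_SQ subrr mulr0 addr0.
by apply: addr_ge0; rewrite ?subr_ge0 // mulr_ge0 ?subr_ge0 // ltW.
Qed.

Theorem lemma6p1 (F : finFieldType) (d : nat) (A : {set 'rV[F]_d})
  (hq : odd #|F|) (hd2 : (2 <= d)%N) (hdeven : ~~ odd d) :
  let q2 : rat := (#|F| ^ (d %/ 2))%:R in
  let a : rat := #|A|%:R in
  (SQ A)%:R <= a ^+ 2 / 2 + q2 / 2 * a - a ^+ 2 / (2 * q2) - a / 2.
Proof.
rewrite /= divn2; have := SQ_le_nat A hq hdeven; rewrite -(ler_nat rat) !natrD !natrM.
set Q : rat := (#|F| ^ d./2)%:R; set a : rat := #|A|%:R; set S : rat := (SQ A)%:R => key.
have Q_gt0 : 0 < Q by rewrite ltr0n expn_gt0 ltnW // finNzRing_gt1.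
rewrite (_ : _ - _ = S + (Q * (a * a) + Q * Q * a - (2 * Q * S + Q * a + a * a)) / (2 * Q)).
  by rewrite lerDl divr_ge0 ?subr_ge0 // mulr_ge0 // ltW.
by field; rewrite gt_eqF.
Qed.
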